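(* There exists a constant $c>0$ such that if $p=p(n)\le c/n^2$, then asymptotically almost surely the random triangular group $\Gamma(n,p)$ is a free group.
   Context: The random triangular group $\Gamma(n,p)$ is the group given by a presentation $\langle S\mid R\rangle$, where $S$ is a set of $n$ generators and $R$ is a random set of relations obtained by including independently, each with probability $p$, every cyclically reduced word of length three over the alphabet $S\cup S^{-1}$ (i.e. every word $abc$ with letters in $S\cup S^{-1}$ such that $a\neq b^{-1}$, $b\neq c^{-1}$, $c\neq a^{-1}$; distinct words are distinct candidates, in particular cyclic shifts of a word are distinct words). A property holds asymptotically almost surely (a.a.s.) if its probability tends to $1$ as $n\to\infty$. *)

From HB Require Import structures.
From mathcomp Require Import all_boot all_order all_algebra.
From mathcomp Require Import boolp classical_sets reals topology normedtype sequences.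
Set Implicit Arguments. Unset Strict Implicit. Unset Printing Implicit Defensive.
Import Order.TTheory GRing.Theory Num.Theory.

(* A letter over the alphabet T is (s, true) for the generator s and
   (s, false) for its inverse s^-1. *)
Definition letter (T : Type) := (T * bool)%type.

Definition linv {T : Type} (x : letter T) : letter T := (x.1, ~~ x.2).

Definition winv {T : Type} (w : seq (letter T)) : seq (letter T) :=
  rev (map linv w).

(* free reduction (stack algorithm): reduce w is the unique freely reduced
   word freely equivalent to w *)
Definition reduce_step {T : eqType} (x : letter T) (acc : seq (letter T)) :=
  match acc with
  | y :: acc' => if y == linv x then acc' else x :: acc
  | [::] => [:: x]
  end.

Definition reduce {T : eqType} (w : seq (letter T)) : seq (letter T) :=
  foldr reduce_step [::] w.

(* Membership of (the class of) a word u in the normal closure, inside the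
   free group F(T), of a set Rel of relator words: u is freely equal to a
   product of conjugates g r^{+-1} g^-1 with r in Rel. *)
Definition in_nclosure {T : eqType} (Rel : seq (letter T) -> Prop)
    (u : seq (letter T)) : Prop :=
  exists l : seq (seq (letter T) * seq (letter T) * bool),
    (forall t, t \in l -> Rel t.1.2) /\
    reduce u =
    reduce (flatten (map (fun t : seq (letter T) * seq (letter T) * bool =>
        t.1.1 ++ (if t.2 then t.1.2 else winv t.1.2) ++ winv t.1.1) l)).

Definition hom_word {T X : Type} (f : T -> seq (letter X))
    (u : seq (letter T)) : seq (letter X) :=
  flatten (map (fun x : letter T => if x.2 then f x.1 else winv (f x.1)) u).

(* The group <T | Rel> = F(T)/N(Rel) is free iff for some set X there is a
   homomorphism F(T) -> F(X) which is onto and whose kernel is exactly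
   N(Rel) (first isomorphism theorem). *)
Definition presents_free_group {T : eqType} (Rel : seq (letter T) -> Prop)
    : Prop :=
  exists (X : eqType) (f : T -> seq (letter X)),
    (forall w : seq (letter X), exists u : seq (letter T),
        reduce (hom_word f u) = reduce w) /\
    (forall u : seq (letter T),
        reduce (hom_word f u) = [::] <-> in_nclosure Rel u).

Definition lett (n : nat) : finType := ('I_n * bool)%type.
Definition triple (n : nat) : finType := (lett n * lett n * lett n)%type.

Definition tword {n : nat} (t : triple n) : seq (letter 'I_n) :=
  [:: t.1.1; t.1.2; t.2].

Definition cyc_red3 {n : nat} (t : triple n) : bool :=
  [&& t.1.1 != linv t.1.2, t.1.2 != linv t.2 & t.2 != linv t.1.1].

Definition candidates (n : nat) : {set triple n} := [set t | cyc_red3 t].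

Definition triangular_free {n : nat} (Rs : {set triple n}) : Prop :=
  presents_free_group (fun r : seq (letter 'I_n) =>
                         exists2 t, t \in Rs & r = tword t).

Local Open Scope ring_scope.

(* Probability that Gamma(n, p) is free: each candidate relator is included
   independently with probability p. *)
Definition prob_free (R : realType) (n : nat) (p : R) : R :=
  \sum_(Rs : {set triple n} | Rs \subset candidates n)
     (if `[< triangular_free Rs >] then
        p ^+ #|Rs| * (1 - p) ^+ (#|candidates n| - #|Rs|)%N
      else 0).

From HB Require Import structures.
From mathcomp Require Import all_boot all_order all_algebra zify ring lra.
From mathcomp Require Import boolp reals topology normedtype sequences exp.
Set Implicit Arguments. Unset Strict Implicit. Unset Printing Implicit Defensive.
Import Order.TTheory GRing.Theory Num.Theory numFieldNormedType.Exports.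

(* If every nonempty subset of the relators contains a generator occurring in
   it exactly once, the relators can be ordered so that each has a generator
   occurring once in it and in none of the later ones; Tietze moves eliminate
   these generators one by one and leave a free group on the rest.  Otherwise
   some nonempty set S of relators is stuck: every generator of its support V
   occurs at least twice in S, so 3|S| >= 2|V| and S contains k = ceil(2|V|/3)
   relators all written in V.  There are at most 8|V|^3 such relators, so the
   union bound over V and k-subsets gives probability at most
   sum_v C(n,v) C(8v^3, k) p^k <= sum_v (v/n) 2^-v <= 2/n
   when p <= 1/(4096 n^2). *)

(** * Free reduction and normal closures *)

Section FreeReduction.
Variable T : eqType.
Implicit Types (x y : letter T) (u v w acc : seq (letter T)).

Lemma linvK x : linv (linv x) = x.
Proof. by case: x => a b; rewrite /linv /= negbK. Qed.

Lemma linv_inj : injective (@linv T).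
Proof. exact: can_inj linvK. Qed.

Fixpoint reduced w := match w with
  | x :: ((y :: _) as w') => (y != linv x) && reduced w'
  | _ => true end.

Lemma reduced_behead x w : reduced (x :: w) -> reduced w.
Proof. by case: w => //= y w /andP[]. Qed.

Lemma reduced_reduce_step x acc : reduced acc -> reduced (reduce_step x acc).
Proof.
case: acc => //= y acc red_acc; case: ifP => [_ | /negbT ne].
  exact: reduced_behead red_acc.
by apply/andP.
Qed.

Lemma reduced_reduce w : reduced (reduce w).
Proof. by elim: w => //= x w IH; apply: reduced_reduce_step. Qed.

Lemma reduce_stepK x acc : reduced acc ->
  reduce_step x (reduce_step (linv x) acc) = acc.
Proof.
case: acc => [|y acc] /=; first by rewrite eqxx.
rewrite linvK; case: ifP => [/eqP -> | ne] /=; last by rewrite eqxx.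
by case: acc => [|z acc] //= /andP[/negbTE ->].
Qed.

Definition reduce_from u acc := foldr reduce_step acc u.

Lemma reduce_cat u v : reduce (u ++ v) = reduce_from u (reduce v).
Proof. by rewrite /reduce /reduce_from foldr_cat. Qed.

Lemma reduced_reduce_from u acc : reduced acc -> reduced (reduce_from u acc).
Proof. by elim: u => //= x u IH /IH; apply: reduced_reduce_step. Qed.

Lemma reduce_reduced w : reduced w -> reduce w = w.
Proof.
elim: w => //= x w IH red_xw; rewrite IH ?(reduced_behead red_xw) //.
by case: w red_xw {IH} => //= y w /andP[/negbTE -> _].
Qed.

Lemma reduce_from_step x r acc : reduced acc -> reduced r ->
  reduce_from (reduce_step x r) acc = reduce_step x (reduce_from r acc).
Proof.
move=> red_acc; case: r => [|y r] //= red_r; case: ifP => //= /eqP ->.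
by rewrite reduce_stepK // reduced_reduce_from.
Qed.

Lemma reduce_from_reduce u acc : reduced acc ->
  reduce_from (reduce u) acc = reduce_from u acc.
Proof.
move=> red_acc; elim: u => //= x u IH.
by rewrite reduce_from_step ?reduced_reduce // IH.
Qed.

Lemma reduce_catl u v : reduce (reduce u ++ v) = reduce (u ++ v).
Proof. by rewrite !reduce_cat reduce_from_reduce // reduced_reduce. Qed.

Lemma reduce_catr u v : reduce (u ++ reduce v) = reduce (u ++ v).
Proof. by rewrite !reduce_cat reduce_reduced // reduced_reduce. Qed.

Definition feq u v := reduce u = reduce v.

Lemma feq_trans u v w : feq u v -> feq v w -> feq u w.
Proof. by rewrite /feq => ->. Qed.

Lemma feq_cat u u' v v' : feq u u' -> feq v v' -> feq (u ++ v) (u' ++ v').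
Proof.
rewrite /feq => eq_u eq_v.
by rewrite -reduce_catr eq_v reduce_catr -reduce_catl eq_u reduce_catl.
Qed.

Lemma winv_cons x u : winv (x :: u) = winv u ++ [:: linv x].
Proof. by rewrite /winv /= rev_cons cats1. Qed.

Lemma winv_cat u v : winv (u ++ v) = winv v ++ winv u.
Proof. by rewrite /winv map_cat rev_cat. Qed.

Lemma winvK u : winv (winv u) = u.
Proof. by rewrite /winv map_rev revK -map_comp (eq_map linvK) map_id. Qed.

Lemma mem_winv x u : (x \in winv u) = (linv x \in u).
Proof. by rewrite /winv mem_rev -{1}(linvK x) (mem_map linv_inj). Qed.

Lemma reduce_from_catV u acc : reduced acc ->
  reduce_from (u ++ winv u) acc = acc.
Proof.
elim: u acc => //= x u IH acc red_acc.
rewrite winv_cons catA /reduce_from foldr_cat /= -/(reduce_from _ _).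
by rewrite IH ?reduce_stepK // reduced_reduce_step.
Qed.

Lemma feq_catV u : feq (u ++ winv u) [::].
Proof. by rewrite /feq /reduce -/(reduce_from _ _) reduce_from_catV. Qed.

Lemma feq_Vcat u : feq (winv u ++ u) [::].
Proof. by rewrite -{2}(winvK u); apply: feq_catV. Qed.

Lemma feq_cat_trivial u z v : feq z [::] -> feq (u ++ z ++ v) (u ++ v).
Proof.
move=> triv_z; apply: feq_cat => //.
by rewrite -[v in X in feq _ X]cat0s; apply: feq_cat.
Qed.

Lemma feq_winv u v : feq u v -> feq (winv u) (winv v).
Proof.
move=> eq_uv; apply: (@feq_trans _ (winv u ++ v ++ winv v)).
  by rewrite -[winv u in X in feq X _]cats0; apply: feq_cat => //; apply/esym/feq_catV.
rewrite catA; apply: (@feq_trans _ ((winv u ++ u) ++ winv v)).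
  by apply: feq_cat => //; apply: feq_cat.
by rewrite -[winv v in X in feq _ X]cat0s; apply: feq_cat => //; apply: feq_Vcat.
Qed.

End FreeReduction.

Lemma reduce_map (Y Z : eqType) (h : letter Y -> letter Z) (w : seq (letter Y)) :
  injective h -> (forall y, h (linv y) = linv (h y)) ->
  reduce (map h w) = map h (reduce w).
Proof.
move=> h_inj h_linv; elim: w => //= x w IH; rewrite IH.
by case: (reduce w) => //= y r; rewrite -h_linv (inj_eq h_inj); case: ifP.
Qed.

Section HomWord.
Variables T X : eqType.
Variable f : T -> seq (letter X).
Implicit Types (x y : letter T) (u v w : seq (letter T)).

Definition hom_letter x : seq (letter X) := if x.2 then f x.1 else winv (f x.1).

Lemma hom_word_cons x u : hom_word f (x :: u) = hom_letter x ++ hom_word f u.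
Proof. by []. Qed.

Lemma hom_word_cat u v : hom_word f (u ++ v) = hom_word f u ++ hom_word f v.
Proof. by rewrite /hom_word map_cat flatten_cat. Qed.

Lemma hom_word1 x : hom_word f [:: x] = hom_letter x.
Proof. by rewrite hom_word_cons cats0. Qed.

Lemma hom_letter_linv x : hom_letter (linv x) = winv (hom_letter x).
Proof. by case: x => s [] //=; rewrite /hom_letter /= winvK. Qed.

Lemma hom_word_winv u : hom_word f (winv u) = winv (hom_word f u).
Proof.
elim: u => //= x u IH.
by rewrite winv_cons hom_word_cat IH hom_word1 hom_letter_linv hom_word_cons winv_cat.
Qed.

Lemma hom_word_reduce_step x r :
  feq (hom_letter x ++ hom_word f r) (hom_word f (reduce_step x r)).
Proof.
case: r => [|y r]; first by rewrite /= hom_word1 cats0.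
rewrite [reduce_step _ _]/=; case: ifP => [/eqP -> | _] //.
rewrite hom_word_cons hom_letter_linv catA -[hom_word f r in X in feq _ X]cat0s.
by apply: feq_cat => //; apply: feq_catV.
Qed.

Lemma hom_word_reduce u : feq (hom_word f u) (hom_word f (reduce u)).
Proof.
elim: u => //= x u IH; rewrite hom_word_cons.
apply: (@feq_trans _ _ (hom_letter x ++ hom_word f (reduce u))).
  exact: feq_cat.
exact: hom_word_reduce_step.
Qed.

Lemma hom_word_feq u v : feq u v -> feq (hom_word f u) (hom_word f v).
Proof.
move=> eq_uv; apply: feq_trans (hom_word_reduce u) _; rewrite eq_uv.
exact/esym/hom_word_reduce.
Qed.

Lemma mem_hom_word z w : z \in hom_word f w ->
  exists2 y, y \in w & (z \in f y.1) \/ (linv z \in f y.1).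
Proof.
elim: w => //= y w IH; rewrite hom_word_cons mem_cat => /orP[|/IH[y' y'w z_y']].
  by rewrite /hom_letter; case: ifP => _ z_y; exists y; rewrite ?mem_head -?mem_winv; auto.
by exists y' => //; rewrite inE y'w orbT.
Qed.

Lemma eq_in_hom_word (g : T -> seq (letter X)) w :
  (forall y, y \in w -> f y.1 = g y.1) -> hom_word f w = hom_word g w.
Proof.
elim: w => //= y w IH eq_fg.
rewrite !hom_word_cons IH => [|z zw]; last by apply: eq_fg; rewrite inE zw orbT.
by rewrite /hom_letter (eq_fg y (mem_head _ _)).
Qed.

End HomWord.

Section NormalClosure.
Variable T : eqType.
Implicit Types (x y : letter T) (u v w : seq (letter T)).
Variable Rel : seq (letter T) -> Prop.

Definition conj_term (t : seq (letter T) * seq (letter T) * bool) :=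
  t.1.1 ++ (if t.2 then t.1.2 else winv t.1.2) ++ winv t.1.1.
Definition conj_prod l := flatten (map conj_term l).

Local Notation N := (in_nclosure Rel).

Lemma nclosure_feq u v : feq u v -> N u -> N v.
Proof. by move=> eq_uv [l [rel_l E]]; exists l; split => //; rewrite -E. Qed.

Lemma nclosure_nil : N [::].
Proof. by exists [::]. Qed.

Lemma nclosure_rel r : Rel r -> N r.
Proof.
move=> rel_r; exists [:: ([::], r, true)]; split.
  by move=> t; rewrite inE => /eqP ->.
by rewrite /= !cats0.
Qed.

Lemma nclosure_cat u v : N u -> N v -> N (u ++ v).
Proof.
move=> [l1 [rel1 E1]] [l2 [rel2 E2]]; exists (l1 ++ l2); split.
  by move=> t; rewrite mem_cat => /orP[/rel1|/rel2].
by rewrite map_cat flatten_cat; apply: feq_cat.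
Qed.

Lemma conj_prod_conj w l :
  feq (conj_prod (map (fun t => (w ++ t.1.1, t.1.2, t.2)) l))
      (w ++ conj_prod l ++ winv w).
Proof.
elim: l => [|t l IH]; first exact/esym/feq_catV.
rewrite /conj_prod /= -/(conj_prod _) -/(conj_prod _).
apply: (@feq_trans _ _ (conj_term (w ++ t.1.1, t.1.2, t.2) ++ (w ++ conj_prod l ++ winv w))).
  exact: feq_cat.
rewrite /conj_term /= winv_cat -!catA; apply: feq_cat => //.
rewrite !catA; apply: feq_cat => //; rewrite -!catA; do 3! apply: feq_cat => //.
by rewrite -[conj_prod l in X in feq _ X]cat0s catA; apply: feq_cat => //; apply: feq_Vcat.
Qed.

Lemma nclosure_conj w u : N u -> N (w ++ u ++ winv w).
Proof.
move=> [l [rel_l E]]; exists (map (fun t => (w ++ t.1.1, t.1.2, t.2)) l); split.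
  by move=> t /mapP[t' t'l ->] /=; apply: rel_l.
apply/esym/(feq_trans (conj_prod_conj w l)).
by do 2! apply: feq_cat => //; apply: esym E.
Qed.

Lemma conj_prod_winv l :
  conj_prod (rev (map (fun t => (t.1, ~~ t.2)) l)) = winv (conj_prod l).
Proof.
elim: l => //= t l IH.
rewrite rev_cons /conj_prod map_rcons flatten_rcons -/(conj_prod _) IH /= winv_cat.
congr (_ ++ _); rewrite /conj_term /= !winv_cat winvK.
by case: (t.2) => /=; rewrite ?winvK ?catA.
Qed.

Lemma nclosure_winv u : N u -> N (winv u).
Proof.
move=> [l [rel_l E]]; exists (rev (map (fun t => (t.1, ~~ t.2)) l)); split.
  by move=> t; rewrite mem_rev => /mapP[t' t'l ->] /=; apply: rel_l.
change (feq (winv u) (conj_prod (rev (map (fun t => (t.1, ~~ t.2)) l)))).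
by rewrite conj_prod_winv; apply: feq_winv.
Qed.

Lemma sub_nclosure (Rel' : seq (letter T) -> Prop) u :
  (forall r, Rel r -> Rel' r) -> N u -> in_nclosure Rel' u.
Proof. by move=> sub_Rel [l [rel_l E]]; exists l; split => // t /rel_l /sub_Rel. Qed.

Definition ncong u v := N (u ++ winv v).

Lemma ncong_refl u : ncong u u.
Proof. exact/(nclosure_feq _ nclosure_nil)/esym/feq_catV. Qed.

Lemma ncong_trans u v w : ncong u v -> ncong v w -> ncong u w.
Proof.
move=> cuv cvw; apply: nclosure_feq (nclosure_cat cuv cvw).
by rewrite -catA [winv v ++ _]catA; apply/feq_cat_trivial/feq_Vcat.
Qed.

Lemma ncong_cat u u' v v' : ncong u u' -> ncong v v' -> ncong (u ++ v) (u' ++ v').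
Proof.
move=> cu cv; apply: nclosure_feq (nclosure_cat (nclosure_conj u cv) cu).
rewrite /ncong winv_cat -!catA; do 3! apply: feq_cat => //.
by rewrite catA -[winv u' in X in feq _ X]cat0s; apply: feq_cat => //; apply: feq_Vcat.
Qed.

Lemma ncong_winv u v : ncong u v -> ncong (winv u) (winv v).
Proof.
move=> /nclosure_winv cuv; apply: nclosure_feq (nclosure_conj (winv u) cuv).
rewrite /ncong !winv_cat !winvK -!catA; apply: feq_cat => //.
by rewrite -[v in X in feq _ X]cats0; apply: feq_cat => //; apply: feq_Vcat.
Qed.

End NormalClosure.

Lemma nclosure_hom_word (T X : eqType) (Rel : seq (letter T) -> Prop)
    (g : T -> seq (letter X)) u :
  (forall r, Rel r -> reduce (hom_word g r) = [::]) ->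
  in_nclosure Rel u -> reduce (hom_word g u) = [::].
Proof.
move=> kill_Rel [l [rel_l E]]; have -> := hom_word_feq g E.
elim: l rel_l {E} => //= t l IH rel_tl.
rewrite hom_word_cat -/(reduce _) -reduce_catr IH => [|t' t'l]; last first.
  by apply: rel_tl; rewrite inE t'l orbT.
have kill_t : feq (hom_word g (if t.2 then t.1.2 else winv t.1.2)) [::].
  have := kill_Rel _ (rel_tl t (mem_head _ _)).
  case: (t.2) => // kill_r; rewrite hom_word_winv.
  exact: (@feq_winv _ _ [::]).
rewrite cats0 !hom_word_cat hom_word_winv -/(feq _ [::]).
by apply: feq_trans (feq_catV (hom_word g t.1.1)); apply: feq_cat_trivial.
Qed.

Lemma ncong_hom_word (T : eqType) (Rel : seq (letter T) -> Prop)
    (g : T -> seq (letter T)) :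
  (forall s, ncong Rel [:: (s, true)] (g s)) ->
  forall u, ncong Rel u (hom_word g u).
Proof.
move=> cong_g; elim => [|x u IH]; first exact: ncong_refl.
rewrite hom_word_cons -cat1s; apply: ncong_cat => //.
case: x => s [] /=; rewrite /hom_letter /=; first exact: cong_g.
exact: ncong_winv (cong_g s).
Qed.

(** * Tietze elimination *)

Section Elimination.
Variable T : eqType.
Implicit Types (x y z : letter T) (u w a b : seq (letter T))
  (L : seq (T * seq (letter T))).

Definition occ (s : T) w := count (fun x : letter T => x.1 == s) w.

Fixpoint peelable L : bool :=
  if L is q :: L' then
    [&& occ q.1 q.2 == 1, all (fun q' => occ q.1 q'.2 == 0) L' & peelable L']
  else true.

Definition rels_of L r : Prop := r \in map snd L.
Definition pivot L (s : T) := has (fun q => q.1 == s) L.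
Definition mentions L (s : T) := has (fun q => 0 < occ s q.2) L.

(* [g] is a Tietze substitution eliminating the pivots of [L]; the third
   clause keeps a generator fresh for [L] out of the images of the others. *)
Definition eliminates L (g : T -> seq (letter T)) : Prop :=
  [/\ forall s, ~~ pivot L s -> g s = [:: (s, true)],
      forall s y, y \in g s -> ~~ pivot L y.1,
      forall s y, y \in g s -> y.1 = s \/ mentions L y.1,
      forall s, ncong (rels_of L) [:: (s, true)] (g s) &
      forall q, q \in L -> reduce (hom_word g q.2) = [::]].

Lemma occ0P s w y : occ s w = 0 -> y \in w -> y.1 != s.
Proof. by move/eqP; rewrite /occ eqn0Ngt -has_count => /hasPn H /H. Qed.

Lemma occ_gt0 w y : y \in w -> 0 < occ y.1 w.
Proof. by move=> yw; rewrite /occ -has_count; apply/hasP; exists y. Qed.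

Lemma occ1P s w : occ s w = 1 ->
  exists a x b, [/\ w = a ++ x :: b, x.1 = s, occ s a = 0 & occ s b = 0].
Proof.
elim: w => //= y w IH; case: eqP => [y_s | ne] /=.
  by move=> [occ_w]; exists [::], y, w.
rewrite add0n => /IH[a [x [b [-> x_s occ_a occ_b]]]].
by exists (y :: a), x, b; split => //=; rewrite occ_a; case: eqP.
Qed.

Lemma eliminates_nil : eliminates [::] (fun s => [:: (s, true)]).
Proof.
split=> // [s y | s]; first by rewrite inE => /eqP ->; left.
exact: ncong_refl.
Qed.

Section EliminateOne.
Variables (L : seq (T * seq (letter T))) (s1 : T) (a b : seq (letter T)).
Variables (x : letter T) (g' : T -> seq (letter T)).
Hypotheses (x_s1 : x.1 = s1) (occ_a : occ s1 a = 0) (occ_b : occ s1 b = 0).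
Hypothesis s1_fresh : forall q, q \in L -> occ s1 q.2 = 0.
Hypothesis elim_g' : eliminates L g'.

Let r1 := a ++ x :: b.
Let L1 := (s1, r1) :: L.

(* Solving [a x b = 1] for the generator [s1]. *)
Definition elim_word := if x.2 then winv a ++ winv b else b ++ a.

Definition elim_subst s := if s == s1 then hom_word g' elim_word else g' s.

Lemma subst_other_avoids s y : s != s1 -> y \in g' s -> y.1 != s1.
Proof.
case: elim_g' => _ _ g'_mentions _ _ ns /g'_mentions[-> // | /hasP[q qL]].
by apply: contraTneq => ->; rewrite -leqNgt s1_fresh.
Qed.

Lemma mem_elim_word z : z \in elim_word -> z.1 != s1 /\ 0 < occ z.1 r1.
Proof.
have mem_ab z' : z' \in a ++ b -> z'.1 != s1 /\ 0 < occ z'.1 r1.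
  rewrite mem_cat => z'ab; split.
    by case/orP: z'ab => [/(occ0P occ_a) | /(occ0P occ_b)].
  by apply: occ_gt0; rewrite /r1 mem_cat inE; case/orP: z'ab => ->; rewrite ?orbT.
rewrite /elim_word; case: (x.2) => zw; last by apply: mem_ab; rewrite mem_cat orbC -mem_cat.
by apply: (mem_ab (linv z)); rewrite mem_cat -!mem_winv -mem_cat.
Qed.

Lemma mem_subst_s1 y : y \in hom_word g' elim_word ->
  [/\ y.1 != s1, ~~ pivot L y.1 & 0 < occ y.1 r1 \/ mentions L y.1].
Proof.
case: elim_g' => _ g'_free g'_mentions _ _.
case/mem_hom_word=> z /mem_elim_word[z_s1 z_occ] y_gz.
have [y' y'_gz <-] : exists2 y', y' \in g' z.1 & y'.1 = y.1.
  by case: y_gz => ?; [exists y | exists (linv y)].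
split; [exact: subst_other_avoids y'_gz | exact: g'_free y'_gz |].
by case: (g'_mentions _ _ y'_gz) => [->|]; [left | right].
Qed.

Lemma hom_word_elim_subst w : (forall y, y \in w -> y.1 != s1) ->
  hom_word elim_subst w = hom_word g' w.
Proof.
by move=> w_avoids; apply: eq_in_hom_word => y /w_avoids /negbTE; rewrite /elim_subst => ->.
Qed.

Lemma ncong_elim_word : ncong (rels_of L1) [:: (s1, true)] elim_word.
Proof.
have rel_r1 : rels_of L1 r1 by rewrite /rels_of inE eqxx.
have x_def : x = (s1, x.2) by rewrite -x_s1; case: (x).
move: rel_r1; rewrite /elim_word /r1 x_def /=; case: (x.2) => rel_r1.
  apply: nclosure_feq (nclosure_conj (winv a) (nclosure_rel rel_r1)).
  rewrite winv_cat !winvK !catA -[X in feq _ X]cat0s -!catA catA.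
  by apply: feq_cat => //; apply: feq_Vcat.
apply: nclosure_feq (nclosure_conj b (nclosure_winv (nclosure_rel rel_r1))).
rewrite !winv_cat winv_cons -!catA catA -[X in feq _ X]cat0s.
by apply: feq_cat => //; apply: feq_catV.
Qed.

Lemma elim_subst_kills_r1 : reduce (hom_word elim_subst r1) = [::].
Proof.
rewrite /r1 hom_word_cat hom_word_cons !hom_word_elim_subst => [|y|y]; last 2 first.
- exact: occ0P occ_b.
- exact: occ0P occ_a.
have -> : hom_letter elim_subst x = winv (hom_word g' a) ++ winv (hom_word g' b).
  rewrite /hom_letter x_s1 /elim_subst eqxx /elim_word.
  by case: (x.2); rewrite hom_word_cat ?winv_cat ?hom_word_winv.
rewrite -/(feq _ [::]) -catA catA; apply: feq_trans (feq_catV (hom_word g' a)).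
by rewrite -[X in feq _ X]cats0; apply: feq_cat => //; apply: feq_Vcat.
Qed.

Lemma eliminates_cons : eliminates L1 elim_subst.
Proof.
case: elim_g' => g'_id g'_free g'_mentions g'_cong g'_kills.
have sub_rels r : rels_of L r -> rels_of L1 r.
  by rewrite /rels_of /= inE => ->; rewrite orbT.
have subst_other s : s != s1 -> elim_subst s = g' s.
  by rewrite /elim_subst => /negbTE ->.
have pivot_L1 s : pivot L1 s = (s == s1) || pivot L s by rewrite /pivot /= eq_sym.
have mentions_L1 s : mentions L1 s = (0 < occ s r1) || mentions L s by [].
split.
- move=> s; rewrite pivot_L1 negb_or => /andP[ns np].
  by rewrite subst_other // g'_id.
- move=> s y; rewrite pivot_L1 negb_or; have [-> | ns] := eqVneq s s1.
    by rewrite /elim_subst eqxx => /mem_subst_s1[-> -> _].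
  by rewrite subst_other // => y_gs; rewrite (subst_other_avoids ns y_gs) (g'_free _ _ y_gs).
- move=> s y; rewrite mentions_L1; have [-> | ns] := eqVneq s s1.
    by rewrite /elim_subst eqxx => /mem_subst_s1[_ _ [-> | ->]]; rewrite ?orbT; right.
  by rewrite subst_other // => /g'_mentions[-> | ->]; [left | rewrite orbT; right].
- move=> s; have [-> | ns] := eqVneq s s1; last first.
    by rewrite subst_other //; apply: sub_nclosure (g'_cong s).
  rewrite /elim_subst eqxx; apply: ncong_trans ncong_elim_word _.
  by apply: ncong_hom_word => s0; apply: sub_nclosure (g'_cong s0).
- move=> q; rewrite inE => /orP[/eqP -> | qL]; first exact: elim_subst_kills_r1.
  by rewrite hom_word_elim_subst ?g'_kills // => y; apply/occ0P/s1_fresh.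
Qed.

End EliminateOne.

Lemma peelable_eliminates L : peelable L -> exists g, eliminates L g.
Proof.
elim: L => [_ | [s1 r1] L IH /= /and3P[/eqP occ_r1 /allP fresh /IH[g' elim_g']]].
  by exists (fun s => [:: (s, true)]); apply: eliminates_nil.
have [a [x [b [-> x_s1 occ_a occ_b]]]] := occ1P occ_r1.
exists (elim_subst s1 a b x g').
by apply: eliminates_cons => // q /fresh /eqP.
Qed.

End Elimination.

Section FreeQuotient.
Variables (T : eqType) (L : seq (T * seq (letter T))) (g : T -> seq (letter T)).
Hypothesis elim_g : eliminates L g.

Definition free_gens := {s : T | ~~ pivot L s}.

Definition lift_letter (y : letter free_gens) : letter T := (val y.1, y.2).

Definition restrict_letter (x : letter T) : option (letter free_gens) :=
  if insub x.1 is Some y then Some (y, x.2) else None.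

Definition restricted_subst (s : T) := pmap restrict_letter (g s).

Lemma lift_letter_inj : injective lift_letter.
Proof. by move=> [a b] [c d] [/val_inj -> ->]. Qed.

Lemma lift_restrict w : (forall y, y \in w -> ~~ pivot L y.1) ->
  map lift_letter (pmap restrict_letter w) = w.
Proof.
elim: w => //= y w IH w_free; have y_free := w_free y (mem_head _ _).
rewrite /restrict_letter insubT /= IH => [|z zw]; last by apply: w_free; rewrite inE zw orbT.
by case: y y_free {w_free}.
Qed.

Lemma hom_word_restrict u :
  hom_word g u = map lift_letter (hom_word restricted_subst u).
Proof.
case: elim_g => _ g_free _ _ _.
have lift_subst s : map lift_letter (restricted_subst s) = g s.
  by apply: lift_restrict => y; apply: g_free.
elim: u => //= x u IH; rewrite !hom_word_cons IH map_cat; congr (_ ++ _).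
rewrite /hom_letter; case: (x.2); first by rewrite lift_subst.
by rewrite /winv map_rev -map_comp -lift_subst -map_comp.
Qed.

Lemma reduce_hom_word_restrict u :
  reduce (hom_word g u) = map lift_letter (reduce (hom_word restricted_subst u)).
Proof. by rewrite hom_word_restrict reduce_map //; apply: lift_letter_inj. Qed.

Lemma restricted_subst_onto (w : seq (letter free_gens)) :
  hom_word restricted_subst (map lift_letter w) = w.
Proof.
case: elim_g => g_id _ _ _ _.
elim: w => //= y w IH; rewrite hom_word_cons IH -cat1s; congr (_ ++ _).
have y_free : ~~ pivot L (val y.1) by case: y => [[]].
rewrite /hom_letter /restricted_subst /= g_id // /= /restrict_letter insubT /=.
have -> : Sub (val y.1) y_free = y.1 by apply: val_inj.
by case: y {y_free} => ? [].
Qed.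

Lemma eliminates_presents_free : presents_free_group (rels_of L).
Proof.
case: elim_g => _ _ _ g_cong g_kills.
exists free_gens, restricted_subst; split => [w | u].
  by exists (map lift_letter w); rewrite restricted_subst_onto.
split=> [kill_u | /(nclosure_hom_word (g := g))].
  have kill_gu : feq (hom_word g u) [::] by rewrite /feq reduce_hom_word_restrict kill_u.
  apply: nclosure_feq (ncong_hom_word g_cong u).
  by rewrite -[u in X in feq _ X]cats0; apply: feq_cat => //; apply: (@feq_winv _ _ [::]).
rewrite reduce_hom_word_restrict => kill_Rel.
suff : map lift_letter (reduce (hom_word restricted_subst u)) = [::] by case: (reduce _).
by apply: kill_Rel => r /mapP[q qL ->]; apply: g_kills.
Qed.

End FreeQuotient.

Lemma peelable_presents_free (T : eqType) (L : seq (T * seq (letter T))) :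
  peelable L -> presents_free_group (rels_of L).
Proof. by case/peelable_eliminates => g /eliminates_presents_free. Qed.

Lemma presents_free_group_ext (T : eqType) (R1 R2 : seq (letter T) -> Prop) :
  (forall r, R1 r <-> R2 r) -> presents_free_group R1 -> presents_free_group R2.
Proof.
move=> eqR [X [f [onto kerf]]]; exists X, f; split => // u; rewrite kerf.
by split; apply: sub_nclosure => r /eqR.
Qed.

(** * Stuck sets of triangular relators *)

Section Triangular.
Variable n : nat.
Implicit Types (t : triple n) (Rs S : {set triple n}) (s : 'I_n) (V : {set 'I_n}).

Definition tocc s t := occ s (tword t).
Definition degree S s := \sum_(t in S) tocc s t.

(* No relator of [S] can be eliminated by a Tietze move inside [S]. *)
Definition stuck S := (S != set0) && [forall s, degree S s != 1].
Definition stuck_free Rs := [forall S : {set triple n}, (S \subset Rs) ==> ~~ stuck S].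

Definition tword_pairs (L : seq ('I_n * triple n)) := map (fun q => (q.1, tword q.2)) L.

Lemma stuck_free_subset Rs S : S \subset Rs -> stuck_free Rs -> stuck_free S.
Proof.
move=> sub_S /forallP free_Rs; apply/forallP => S'; apply/implyP => sub_S'.
by have /implyP := free_Rs S'; apply; apply: subset_trans sub_S.
Qed.

Lemma stuck_free_peelable Rs : stuck_free Rs -> exists L : seq ('I_n * triple n),
  peelable (tword_pairs L) /\ (forall t, t \in Rs <-> exists2 q, q \in L & q.2 = t).
Proof.
move: {2}#|Rs| (leqnn #|Rs|) => k; elim: k Rs => [|k IH] Rs card_Rs free_Rs.
  exists [::]; split=> // t; split=> [|[] //].
  by move: card_Rs; rewrite leqn0 cards_eq0 => /eqP ->; rewrite inE.
have [-> | Rs_n0] := eqVneq Rs set0.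
  by exists [::]; split=> // t; split=> [|[] //]; rewrite inE.
have : ~~ stuck Rs by move/forallP: free_Rs => /(_ Rs); rewrite subxx.
rewrite /stuck Rs_n0 negb_forall => /existsP[s]; rewrite negbK.
case/sum_nat_eq1=> t [t_Rs occ_t occ_others].
have card_Rs' : #|Rs :\ t| <= k by move: card_Rs; rewrite (cardsD1 t) t_Rs.
have free_Rs' := stuck_free_subset (subD1set Rs t) free_Rs.
have [L [peel_L mem_L]] := IH _ card_Rs' free_Rs'.
exists ((s, t) :: L); split.
  rewrite /= peel_L andbT; apply/andP; split; first exact/eqP/occ_t.
  apply/allP => q /mapP[q' q'L ->] /=.
  have : q'.2 \in Rs :\ t by apply/mem_L; exists q'.
  by rewrite !inE => /andP[ne q'_Rs]; apply/eqP/occ_others.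
move=> t'; split.
  have [-> _ | ne t'_Rs] := eqVneq t' t; first by exists (s, t); rewrite ?mem_head.
  have /mem_L[q qL <-] : t' \in Rs :\ t by rewrite !inE ne.
  by exists q; rewrite // inE qL orbT.
case=> q; rewrite inE => /orP[/eqP -> <- // | qL q_t'].
have : t' \in Rs :\ t by apply/mem_L; exists q.
by rewrite inE => /andP[].
Qed.

Lemma stuck_free_triangular_free Rs : stuck_free Rs -> triangular_free Rs.
Proof.
case/stuck_free_peelable=> L [peel_L mem_L].
apply: presents_free_group_ext (peelable_presents_free peel_L) => r.
rewrite /rels_of /tword_pairs -map_comp; split.
  by case/mapP=> q qL ->; exists q.2 => //; apply/mem_L; exists q.
by case=> t /mem_L[q qL <-] ->; apply/mapP; exists q.
Qed.

Definition on_gens V t := [&& t.1.1.1 \in V, t.1.2.1 \in V & t.2.1 \in V].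
Definition cands_on V := [set t in candidates n | on_gens V t].
Definition support S := [set s | 0 < degree S s].

(* [(2 v + 2) %/ 3] is the ceiling of [2 v / 3]. *)
Definition stuck_size (v : nat) := ((2 * v + 2) %/ 3)%N.

Lemma sum_tocc t : \sum_s tocc s t = 3.
Proof.
have sum_eq1 (x : 'I_n) : \sum_s (x == s : nat) = 1.
  by rewrite (bigD1 x) //= eqxx big1 // => s ne; rewrite eq_sym (negbTE ne).
rewrite (eq_bigr (fun s => (t.1.1.1 == s) + (t.1.2.1 == s) + (t.2.1 == s))).
  by rewrite !big_split /= !sum_eq1.
by move=> s _; rewrite /tocc /occ /= addn0 addnA.
Qed.

Lemma tocc_gt0 s t : (0 < tocc s t) = [|| t.1.1.1 == s, t.1.2.1 == s | t.2.1 == s].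
Proof. by rewrite /tocc /occ /=; do 3!case: (_ == s). Qed.

Lemma mem_support S s t : t \in S -> 0 < tocc s t -> s \in support S.
Proof. by move=> tS occ_t; rewrite inE (leq_trans occ_t) // /degree (bigD1 t) ?leq_addr. Qed.

(* Every generator in the support of a stuck set has degree at least two,
   and the degrees add up to [3 #|S|]. *)
Lemma stuck_support_card S : stuck S -> 2 * #|support S| <= 3 * #|S|.
Proof.
case/andP=> _ /forallP no_deg1.
have -> : 3 * #|S| = \sum_(t in S) \sum_s tocc s t.
  rewrite (eq_bigr (fun _ => 3)) => [|t _]; last exact: sum_tocc.
  by rewrite sum_nat_const mulnC.
rewrite exchange_big /= (bigID (mem (support S))) /=.
apply: leq_trans (leq_addr _ _); rewrite mulnC -sum_nat_const.
apply: leq_sum => s; rewrite inE; have := no_deg1 s.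
by rewrite /degree; case: (\sum_(t in S) _) => // [[]].
Qed.

Lemma stuck_witness Rs : Rs \subset candidates n -> ~~ stuck_free Rs ->
  exists V, exists2 T : {set triple n}, V != set0 &
    [/\ T \subset cands_on V, #|T| = stuck_size #|V| & T \subset Rs].
Proof.
move=> Rs_cands; rewrite /stuck_free negb_forall => /existsP[S].
rewrite negb_imply negbK => /andP[S_Rs stuck_S].
exists (support S).
have : 0 < #|[set T : {set triple n} | T \subset S & #|T| == stuck_size #|support S|]|.
  rewrite cards_draws bin_gt0 /stuck_size; have := stuck_support_card stuck_S; lia.
case/card_gt0P=> T; rewrite inE => /andP[T_S /eqP card_T]; exists T.
  case/andP: stuck_S => /set0Pn[t tS] _; apply/set0Pn; exists t.1.1.1.
  by apply: (mem_support tS); rewrite tocc_gt0 eqxx.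
split=> //; last exact: subset_trans T_S S_Rs.
apply: subset_trans T_S _; apply/subsetP => t tS.
rewrite inE (subsetP Rs_cands) ?(subsetP S_Rs) //=.
by rewrite /on_gens !(mem_support tS) // tocc_gt0 eqxx ?orbT.
Qed.

End Triangular.

(** * The union bound *)

Lemma card_cands_on n (V : {set 'I_n}) : #|cands_on V| <= 8 * #|V| ^ 3.
Proof.
pose L : {set lett n} := setX V [set: bool].
have -> : 8 * #|V| ^ 3 = #|setX (setX L L) L|.
  by rewrite !cardsX cardsT card_bool; move: #|V| => v; nia.
apply: subset_leq_card; apply/subsetP => [[[a b] c]].
by rewrite !inE /on_gens /= => /andP[_ /and3P[-> -> ->]].
Qed.

Lemma bin_fact_le_exp m k : 'C(m, k) * k`! <= m ^ k.
Proof.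
rewrite bin_ffact; elim: k m => // k IH m.
rewrite ffactnS expnS leq_mul2l (leq_trans (IH _)) ?orbT //.
by case: k {IH} => // k; rewrite leq_exp2r // leq_pred.
Qed.

Section ExpFact.
Local Open Scope ring_scope.

(* [m^m / m! <= exp m <= 4^m] *)
Lemma exprnn_le_fact (R : realType) m : m%:R ^+ m <= 4 ^+ m * m`!%:R :> R.
Proof.
case: m => [|j]; first by rewrite !expr0 mul1r.
have expR_half : expR (2^-1 : R) <= 2.
  have := expR_ge1Dx (- 2^-1 : R); rewrite expRN.
  have -> : (1 - 2^-1 : R) = 2^-1 by field.
  by rewrite lef_pV2 ?posrE ?expR_gt0.
have expR1 : expR (1 : R) <= 4.
  have -> : (1 : R) = 2^-1 + 2^-1 by field.
  rewrite expRD; apply: le_trans (ler_pM _ _ expR_half expR_half) _; try exact/ltW/expR_gt0.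
  lra.
have := expR_ge1Dxn j (ler0n R j.+1).
rewrite -[j.+1%:R]mulr1 expRM_natl => taylor.
have : (j.+1%:R * 1) ^+ j.+1 / j.+1`!%:R <= 4 ^+ j.+1 :> R.
  apply: le_trans (le_trans (ler_wpDl ler01 (lexx _)) taylor) _.
  by apply: lerXn2r => //; rewrite nnegrE; [exact/ltW/expR_gt0 | lra].
by rewrite mulr1 ler_pdivrMr ?ltr0n ?fact_gt0.
Qed.

End ExpFact.

Section BinomialBound.
(* Only serves to transport [exprnn_le_fact] to [nat]. *)
Variable R : realType.

(* With [k = stuck_size v], both factorials are absorbed by [v^v <= 4^v v!]:
   [C(n,v) C(8v^3,k) <= n^v (8v^3)^k / (v! k!)] and [3k >= 2v + 1]. *)
Lemma binomial_stuck_bound n v : 1 <= v <= n ->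
  'C(n, v) * 'C(8 * v ^ 3, stuck_size v) * n * 2 ^ v <=
  v * n ^ (2 * stuck_size v) * 4096 ^ stuck_size v.
Proof.
case/andP=> v_gt0 v_le_n; set k := stuck_size v.
have pow_fact m : m ^ m <= 4 ^ m * m`!.
  by rewrite -(ler_nat R) natrM !natrX exprnn_le_fact.
have k_ge : v.+1 <= 2 * k by rewrite /k /stuck_size; lia.
have exp_mono a b e : a <= b -> a ^ e <= b ^ e by case: e => // e; rewrite leq_exp2r.
have bound_n : n ^ v.+1 * v ^ (2 * k - v.+1) <= n ^ (2 * k).
  have -> : 2 * k = v.+1 + (2 * k - v.+1) by lia.
  by rewrite expnD addKn leq_mul2l exp_mono ?orbT.
have bound_vk : v ^ k <= 8 ^ k * k`!.
  apply: leq_trans (exp_mono _ _ k (_ : v <= 2 * k)) _; first lia.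
  by rewrite expnMn (_ : 8 = 2 * 4) // expnMn -mulnA leq_mul2l pow_fact orbT.
have bound_vv : v ^ v <= 16 ^ k * v`!.
  apply: leq_trans (pow_fact v) _; rewrite leq_mul2r (_ : 16 = 4 ^ 2) //.
  by rewrite -expnM leq_pexp2l ?orbT //; lia.
have bound_2v : 2 ^ v <= 4 ^ k by rewrite (_ : 4 = 2 ^ 2) // -expnM leq_pexp2l //; lia.
rewrite -(@leq_pmul2r (v`! * k`!)) ?muln_gt0 ?fact_gt0 //.
apply: (@leq_trans (n ^ v * (8 * v ^ 3) ^ k * n * 2 ^ v)).
  have -> : 'C(n, v) * 'C(8 * v ^ 3, k) * n * 2 ^ v * (v`! * k`!) =
     ('C(n, v) * v`!) * ('C(8 * v ^ 3, k) * k`!) * n * 2 ^ v by ring.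
  by do 3!apply: leq_mul => //; apply: bin_fact_le_exp.
have -> : n ^ v * (8 * v ^ 3) ^ k * n * 2 ^ v =
    (n ^ v.+1 * v ^ (2 * k - v.+1)) * v * v ^ k * v ^ v * 8 ^ k * 2 ^ v.
  have e3k : 3 * k = 1 + (2 * k - v.+1) + k + v by lia.
  have -> : (8 * v ^ 3) ^ k = 8 ^ k * (v * v ^ (2 * k - v.+1) * v ^ k * v ^ v).
    by rewrite expnMn -expnM e3k !expnD expn1.
  by rewrite expnS; ring.
apply: (@leq_trans (n ^ (2 * k) * v * (8 ^ k * k`!) * (16 ^ k * v`!) * 8 ^ k * 4 ^ k)).
  by repeat apply: leq_mul.
by rewrite (_ : 4096 = 8 * 16 * 8 * 4) // !expnMn leq_eqVlt; apply/orP; left; apply/eqP; ring.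
Qed.

End BinomialBound.

Local Open Scope ring_scope.

Section Weights.
Variables (R : comPzRingType) (I : finType) (C : {set I}) (p : R).

Definition weight (J : {set I}) : R := p ^+ #|J| * (1 - p) ^+ (#|C| - #|J|)%N.

(* Expand [\prod_i (F i + G i)], where the factor of [i] is [p + (1 - p)] on
   [C :\: A], [p + 0] on [A] and [0 + 1] off [C]. *)
Lemma sum_weight_superset (A : {set I}) : A \subset C ->
  \sum_(J : {set I} | J \subset C) (if A \subset J then weight J else 0) = p ^+ #|A|.
Proof.
move=> AC.
pose F i : R := if i \in C then p else 0.
pose G i : R := if i \in C then (if i \in A then 0 else 1 - p) else 1.
have <- : \prod_i (F i + G i) = p ^+ #|A|.
  rewrite (bigID (mem A)) /= [X in _ * X]big1 ?mulr1 => [|i /negbTE iA].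
    rewrite -prodr_const; apply: eq_bigr => i iA.
    by rewrite /F /G (subsetP AC) ?iA ?addr0.
  by rewrite /F /G iA; case: ifP => _; rewrite ?add0r // addrC subrK.
rewrite bigA_distr big_mkcond /=; apply: eq_big => // J _.
have [JC | /subsetPn[i iJ iC]] := boolP (J \subset C); last first.
  by rewrite (bigD1 i) //= iJ /F (negbTE iC) mul0r.
have [AJ | /subsetPn[i iA iJ]] := boolP (A \subset J); last first.
  by rewrite (bigD1 i) //= (negbTE iJ) /G (subsetP AC i iA) iA mul0r.
rewrite (bigID (mem J)) /= /weight; congr (_ * _).
  by rewrite -prodr_const; apply: eq_bigr => i iJ; rewrite iJ /F (subsetP JC).
rewrite (bigID (mem C)) /= [X in _ * X]big1 ?mulr1; last first.
  by move=> i /andP[/negbTE iJ /negbTE iC]; rewrite iJ /G iC.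
rewrite (eq_bigr (fun _ => 1 - p)) => [|i /andP[/negbTE iJ iC]]; last first.
  by rewrite iJ /G iC; case: ifP => // iA; move: iJ; rewrite (subsetP AJ i iA).
rewrite prodr_const; congr (_ ^+ _).
transitivity #|C :\: J|; first by rewrite cardsD (setIidPr JC).
by apply: eq_card => i; rewrite !inE.
Qed.

Lemma sum_weight : \sum_(J : {set I} | J \subset C) weight J = 1.
Proof.
rewrite -(expr0 p) -(cards0 I) -(sum_weight_superset (sub0set C)).
by apply: eq_bigr => J _; rewrite sub0set.
Qed.

End Weights.

Lemma sum_set_card (V : nmodType) n (H : nat -> V) :
  \sum_(A : {set 'I_n}) H #|A| = \sum_(v < n.+1) H v *+ 'C(n, v).
Proof.
rewrite (partition_big (fun A : {set 'I_n} => (inord #|A| : 'I_n.+1)) xpredT) //=.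
apply: eq_bigr => v _.
have card_lt (A : {set 'I_n}) : (#|A| < n.+1)%N.
  by rewrite ltnS -[X in (_ <= X)%N]card_ord max_card.
rewrite (eq_bigl (fun A : {set 'I_n} => #|A| == v)) => [|A]; last first.
  by rewrite -val_eqE /= inordK.
rewrite (eq_bigr (fun _ => H v)) => [|A /eqP -> //].
have -> : 'C(n, v) = #|[set A : {set 'I_n} | #|A| == v]| by rewrite card_draws card_ord.
by rewrite sumr_const; congr (_ *+ _); apply: eq_card => A; rewrite inE.
Qed.

Section UnionBound.
Variable R : realType.

Lemma stuck_term_le n v (q : R) : (1 <= v <= n)%N -> 0 <= q ->
  q <= 4096%:R^-1 / n%:R ^+ 2 ->
  'C(8 * v ^ 3, stuck_size v)%:R * q ^+ stuck_size v *+ 'C(n, v) <=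
  v%:R / n%:R * 2^-1 ^+ v.
Proof.
move=> v_range q_ge0 q_le; have /andP[_ v_le_n] := v_range; set k := stuck_size v.
have n_gt0 : (0 < n)%N by apply: leq_trans v_le_n; case/andP: v_range.
pose D : R := (4096 ^ k * n ^ (2 * k))%:R.
have D_gt0 : 0 < D by rewrite ltr0n muln_gt0 !expn_gt0 n_gt0.
have qk_le : q ^+ k <= D^-1.
  have -> : D^-1 = (4096%:R^-1 / n%:R ^+ 2) ^+ k.
    by rewrite /D natrM !natrX exprM -exprMn -invfM -exprVn.
  by apply: lerXn2r => //; rewrite nnegrE // (le_trans q_ge0 q_le).
rewrite -mulr_natl; apply: le_trans (_ : 'C(n, v)%:R * ('C(8 * v ^ 3, k)%:R * D^-1) <= _).
  by rewrite ler_wpM2l ?ler0n // ler_wpM2l ?ler0n.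
rewrite mulrA -natrM exprVn -mulrA -invfM -natrX -natrM.
have nv_gt0 : 0 < (n * 2 ^ v)%:R :> R by rewrite ltr0n muln_gt0 expn_gt0 n_gt0.
rewrite ler_pdivlMr // mulrAC ler_pdivrMr // -!natrM ler_nat.
have -> : (v * (4096 ^ k * n ^ (2 * k)) = v * n ^ (2 * k) * 4096 ^ k)%N by ring.
by rewrite mulnA; apply: binomial_stuck_bound.
Qed.

Lemma sum_mul_half_pow_le m : \sum_(v < m) v%:R * (2^-1 : R) ^+ v <= 2.
Proof.
suff telescope : \sum_(v < m) v%:R * (2^-1 : R) ^+ v + m.+1%:R * 2^-1 ^+ m * 2 = 2.
  by rewrite -[X in _ <= X]telescope lerDl !mulr_ge0 // exprn_ge0 // invr_ge0.
elim: m => [|m IH]; first by rewrite big_ord0 add0r expr0 mulr1 mul1r.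
by rewrite big_ord_recr /= -[RHS]IH -addrA exprS; congr (_ + _); field.
Qed.

End UnionBound.

Section StuckProbability.
Variables (R : realType) (n : nat) (p : R).
Hypotheses (p_ge0 : 0 <= p) (p_le1 : p <= 1).

Local Notation C := (candidates n).
Local Notation wt := (weight C p).

Definition witnesses (V : {set 'I_n}) :=
  [set T : {set triple n} | T \subset cands_on V & #|T| == stuck_size #|V|].

Lemma weight_ge0 Rs : 0 <= wt Rs.
Proof. by rewrite mulr_ge0 // exprn_ge0 // subr_ge0. Qed.

Lemma stuck_weight_le_witnesses :
  \sum_(Rs : {set triple n} | Rs \subset C) (if stuck_free Rs then 0 else wt Rs) <=
  \sum_(V : {set 'I_n} | (0 < #|V|)%N) \sum_(T in witnesses V) p ^+ stuck_size #|V|.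
Proof.
pose nwit (Rs : {set triple n}) : R := \sum_(V : {set 'I_n} | (0 < #|V|)%N)
    \sum_(T in witnesses V) (T \subset Rs)%:R.
have nwit_ge0 Rs : 0 <= nwit Rs by do 2!(apply: sumr_ge0 => ? _).
apply: (@le_trans _ _ (\sum_(Rs : {set triple n} | Rs \subset C) wt Rs * nwit Rs)).
  apply: ler_sum => Rs Rs_C; case: ifP => free_Rs.
    by rewrite mulr_ge0 ?weight_ge0.
  have [V [T V_n0 [T_on T_card T_Rs]]] := stuck_witness Rs_C (negbT free_Rs).
  rewrite -[X in X <= _]mulr1 ler_wpM2l ?weight_ge0 //.
  rewrite /nwit (bigD1 V) ?card_gt0 //= (bigD1 T) /=; last by rewrite inE T_on T_card eqxx.
  rewrite T_Rs -addrA lerDl addr_ge0 ?sumr_ge0 // => V' _.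
  by apply: sumr_ge0 => ? _.
rewrite (eq_bigr (fun Rs => \sum_(V : {set 'I_n} | (0 < #|V|)%N)
    \sum_(T in witnesses V) wt Rs * (T \subset Rs)%:R)) => [|Rs _]; last first.
  by rewrite /nwit mulr_sumr; apply: eq_bigr => V _; rewrite mulr_sumr.
rewrite exchange_big /=; apply: ler_sum => V _.
rewrite exchange_big /=; apply: ler_sum => T; rewrite inE => /andP[T_on /eqP <-].
have T_C : T \subset C.
  by apply: subset_trans T_on _; apply/subsetP => t; rewrite inE => /andP[].
rewrite -(sum_weight_superset p T_C) le_eqVlt; apply/orP; left; apply/eqP.
by apply: eq_bigr => Rs _; case: ifP; rewrite ?mulr1 ?mulr0.
Qed.

Definition stuck_term (v : nat) : R :=
  if v == 0%N then 0 else 'C(8 * v ^ 3, stuck_size v)%:R * p ^+ stuck_size v.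

Lemma witnesses_le_stuck_terms :
  \sum_(V : {set 'I_n} | (0 < #|V|)%N) \sum_(T in witnesses V) p ^+ stuck_size #|V| <=
  \sum_(v < n.+1) stuck_term v *+ 'C(n, v).
Proof.
have term_ge0 v : 0 <= stuck_term v.
  by rewrite /stuck_term; case: ifP => // _; rewrite mulr_ge0 // exprn_ge0.
rewrite -sum_set_card [X in _ <= X](bigID (fun V : {set 'I_n} => (0 < #|V|)%N)) /=.
rewrite -[X in X <= _]addr0; apply: lerD; last exact: sumr_ge0.
apply: ler_sum => V V_n0.
rewrite /stuck_term eqn0Ngt V_n0 /= sumr_const -[p ^+ _ *+ _]mulr_natl.
rewrite ler_wpM2r ?exprn_ge0 // ler_nat cards_draws leq_bin2l //.
exact: card_cands_on.
Qed.

Lemma stuck_weight_le : (0 < n)%N -> p <= 4096%:R^-1 / n%:R ^+ 2 ->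
  \sum_(Rs : {set triple n} | Rs \subset C) (if stuck_free Rs then 0 else wt Rs) <=
  2 * n%:R^-1.
Proof.
move=> n_gt0 p_small.
apply: le_trans stuck_weight_le_witnesses _; apply: le_trans witnesses_le_stuck_terms _.
apply: (@le_trans _ _ (\sum_(v < n.+1) v%:R / n%:R * 2^-1 ^+ v)).
  apply: ler_sum => v _; rewrite /stuck_term; case: eqP => [-> | /eqP v_n0].
    by rewrite mul0r mul0r mul0rn.
  by apply: stuck_term_le => //; apply/andP; split; [lia | have := ltn_ord v; lia].
under eq_bigr => v _ do rewrite mulrAC.
by rewrite -mulr_suml ler_wpM2r ?invr_ge0 ?ler0n // sum_mul_half_pow_le.
Qed.

Lemma prob_free_bounds : (0 < n)%N -> p <= 4096%:R^-1 / n%:R ^+ 2 ->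
  1 - 2 * n%:R^-1 <= prob_free n p <= 1.
Proof.
move=> n_gt0 p_small.
have -> : prob_free n p = \sum_(Rs : {set triple n} | Rs \subset C)
    (if `[< triangular_free Rs >] then wt Rs else 0) by [].
apply/andP; split; last first.
  by rewrite -(sum_weight C p); apply: ler_sum => Rs _; case: ifP => // _; apply: weight_ge0.
apply: (@le_trans _ _ (\sum_(Rs : {set triple n} | Rs \subset C)
    (wt Rs - if stuck_free Rs then 0 else wt Rs))).
  by rewrite sumrB sum_weight lerD2l lerN2; apply: stuck_weight_le.
apply: ler_sum => Rs _; case: ifP => free_Rs.
  by have /asboolP -> := stuck_free_triangular_free free_Rs; rewrite subr0.
by rewrite subrr; case: ifP => // _; apply: weight_ge0.
Qed.

End StuckProbability.

Local Open Scope classical_set_scope.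

Theorem theorem1p1 (R : realType) :
  exists c : R, 0 < c /\
    forall p : nat -> R,
      (forall n : nat, 0 <= p n <= 1) ->
      (forall n : nat, (0 < n)%N -> p n <= c / (n%:R ^+ 2)) ->
      (fun n : nat => prob_free n (p n)) @ \oo --> (1 : R).
Proof.
exists 4096%:R^-1; split=> [|p p_range p_small]; first by rewrite invr_gt0 ltr0n.
apply: (@squeeze_cvgr _ _ _ _ (fun n => 1 - 4 * harmonic n) (fun _ => 1)).
- near=> n; have n_gt0 : (0 < n)%N by near: n; apply: nbhs_infty_ge.
  have /andP[p_ge0 p_le1] := p_range n.
  have /andP[lower ->] := prob_free_bounds p_ge0 p_le1 n_gt0 (p_small n n_gt0).
  rewrite andbT; apply: le_trans lower; rewrite lerD2l lerN2 /harmonic /=.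
  (* [2 / n <= 4 / (n + 1)] as soon as [n >= 1] *)
  rewrite ler_pdivrMr ?ltr0n // mulrAC ler_pdivlMr ?ltr0n // -!natrM ler_nat; lia.
- have : (fun n => 1 - 4 * harmonic n) @ \oo --> (1 - 4 * 0 : R).
    by apply: cvgB; [exact: cvg_cst | apply: cvgM; [exact: cvg_cst | exact: cvg_harmonic]].
  by rewrite mulr0 subr0.
- exact: cvg_cst.
Unshelve. all: by end_near.
Qed.
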